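(* Let $c_k\in(0,1)$, $l_k>0$ decreasing to $0$, $I_k$ the open interval of length $l_k$ centered at $c_k$, and assume (A1) and (A3) below. Let $f\in C([0,1])$, let $\mu_k=\frac{1}{|I_k|}f(x)\,dx|_{I_k}$ (with $dx$ Lebesgue measure restricted to $[0,1]$), $\mu_{\mathcal{A}_n}=\frac{1}{\#\mathcal{A}_n}\sum_{k\in\mathcal{A}_n}\mu_k$ and $V_n=\bigcup_{k\in\mathcal{A}_n}I_k$. Then $\mu_{\mathcal{A}_n}(V_n)=\int_0^1 f(x)\phi(x)\,dx+o(1)$ as $n\to\infty$.
   Context: Notation: $\mathcal{A}_n=\{n,\dots,2n-1\}$, $\mathcal{A}_{n,q}=\mathcal{A}_n\cup\mathcal{A}_{2n}\cup\cdots\cup\mathcal{A}_{2^qn}$. (A1) There is $\phi\in L^1([0,1],dx)$, $\phi>0$ a.e., with $\frac{1}{\#\mathcal{A}_n}\sum_{k\in\mathcal{A}_n}g(c_k)\to\int_0^1 g\phi\,dx$ for every $g\in C([0,1])$; $\phi$ in the claim is this function. (A3) There are integers $q(n)\to\infty$ such that for every $\varepsilon>0$, for all large $n$ and all $i\ne j$ in $\mathcal{A}_{n,q(n)}$, $\frac{l_i+l_j}{2|c_i-c_j|}<\varepsilon$. *)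

From HB Require Import structures.
From mathcomp Require Import all_boot all_order all_algebra.
From mathcomp Require Import all_classical all_reals all_analysis.
Set Implicit Arguments. Unset Strict Implicit. Unset Printing Implicit Defensive.
Import Order.TTheory GRing.Theory Num.Theory.
Import numFieldNormedType.Exports.
Local Open Scope classical_set_scope.
Local Open Scope ring_scope.

Definition Ablock (n : nat) : set nat := [set k | (n <= k < n.*2)%N].

Definition Ablocks (n q : nat) : set nat :=
  [set k | exists2 m : nat, (m <= q)%N & Ablock (2 ^ m * n) k].

Definition Iint (R : realType) (c l : nat -> R) (k : nat) : set R :=
  `](c k - l k / 2), (c k + l k / 2)[.

Definition mu_k (R : realType) (c l : nat -> R) (f : R -> R) (k : nat)
  (A : set R) : R :=
  (l k)^-1 * \int[@lebesgue_measure R]_(x in A `&` Iint c l k `&` `[0, 1]) f x.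

Definition mu_A (R : realType) (c l : nat -> R) (f : R -> R) (n : nat)
  (A : set R) : R :=
  (n%:R)^-1 * \sum_(n <= k < n.*2) mu_k c l f k A.

Definition Vn (R : realType) (c l : nat -> R) (n : nat) : set R :=
  \bigcup_(k in Ablock n) Iint c l k.

From HB Require Import structures.
From mathcomp Require Import all_boot all_order all_algebra.
From mathcomp Require Import all_classical all_reals all_analysis.
From mathcomp Require Import measurable_realfun lra ring.
Import Order.TTheory GRing.Theory Num.Theory.
Import numFieldNormedType.Exports.
Local Open Scope classical_set_scope.
Local Open Scope ring_scope.

(* For k in A_n the interval I_k lies inside V_n, so mu_k(V_n) is the mean of
   f over J_k = I_k /\ [0, 1] rescaled by |J_k| / l_k.  Once l_k is small,
   uniform continuity makes it f(c_k) up to eps, except for the mass lost when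
   I_k sticks out of [0, 1]; that only happens for c_k within l_k / 2 of an
   endpoint, where a continuous bump supported near 0 and 1 is at least 1/2.
   Applying (A1) to f and to the bump, the error is at most
   eps + 2 sup|f| (\int bump * phi + eps), and \int bump * phi is small by
   dominated convergence as the bump shrinks. *)

Section continuous_on_compact.
Context {R : realType} {A : set R} {f : R -> R}.
Hypotheses (cA : compact A) (cf : {within A, continuous f}).

Lemma within_continuous_compact_bounded : exists M, forall x, A x -> `|f x| <= M.
Proof.
have /compact_bounded[M [_ hM]] := continuous_compact cf cA.
by exists (M + 1) => x Ax; apply: (hM (M + 1)); [rewrite ltrDl | exists x].
Qed.

Lemma within_continuous_compact_unif [e : R] : 0 < e ->
  exists2 eta : R, 0 < eta & forall x y, A x -> A y ->
    `|x - y| < eta -> `|f x - f y| < e.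
Proof.
move=> e0.
(* Compactness in near-covering form: it suffices that every x in A has a
   neighbourhood and a tail of indices m on which 1/(m+1) is a modulus. *)
have NC := (near_covering_withinP _).2 ((compact_near_coveringP _).1 cA).
have [x Ax|N _ HN] := NC nat \oo (fun m x => forall y, A y ->
    `|x - y| < m.+1%:R^-1 -> `|f x - f y| < e) _; last first.
  by exists N.+1%:R^-1 => // x y Ax Ay; exact: HN N (leqnn N) x Ax y Ay.
have e20 : 0 < e / 2 by rewrite divr_gt0.
have /cvgrPdist_lt/(_ _ e20) := cf x.
rewrite /nbhs /= -nbhs_subspace_in // /within /= => /nbhs_ballP [r r0 Hr].
have r20 : 0 < r / 2 by rewrite divr_gt0.
have [N _ HN] := near_infty_natSinv_lt (PosNum r20).
exists (ball x (r / 2), [set m | (N <= m)%N]).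
  by split; [exact: nbhsx_ballx | exists N].
case=> x' m [/= xx' Nm] Ax' y Ay x'y.
have hm : m.+1%:R^-1 < r / 2 := HN m Nm.
have close z : A z -> `|x - z| < r -> `|f x - f z| < e / 2.
  by move=> Az xz; exact: Hr z xz Az.
rewrite /ball /= in xx'.
have xx'r : `|x - x'| < r.
  by apply: lt_trans xx' _; rewrite ltr_pdivrMr // ltr_pMr // ltr1n.
have xyr : `|x - y| < r.
  rewrite (le_lt_trans (ler_distD x' x y)) // [r]splitr ltrD //; exact: lt_trans x'y hm.
rewrite (le_lt_trans (ler_distD (f x) (f x') (f y))) // [e]splitr distrC.
by rewrite ltrD // close.
Qed.

End continuous_on_compact.

Section edge_bump.
Context {R : realType}.
Implicit Types d x y : R.

Definition tent d y : R := Num.max 0 (1 - y / (2 * d)).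

Definition edge_bump d x : R := tent d x + tent d (1 - x).

Lemma continuous_tent d : continuous (tent d).
Proof.
move=> y; apply: (@continuous_max R R (cst 0) (fun y => 1 - y / (2 * d))).
  exact: cvg_cst.
by apply: cvgB; [exact: cvg_cst | apply: cvgMr_tmp; exact: cvg_id].
Qed.

Lemma tent_ge0 d y : 0 <= tent d y.
Proof. by rewrite le_max lexx. Qed.

Lemma tent_le1 d y : 0 < d -> 0 <= y -> tent d y <= 1.
Proof.
by move=> d0 y0; rewrite ge_max ler01 gerBl divr_ge0 // mulr_ge0 // ltW.
Qed.

Lemma tent_ge_half d y : 0 < d -> y < d -> 2^-1 <= tent d y.
Proof.
move=> d0 yd; rewrite le_max; apply/orP; right.
rewrite lerBrDr -lerBrDl ler_pdivrMr ?mulr_gt0 //; lra.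
Qed.

Lemma tent_eq0 d y : 0 < d -> 2 * d <= y -> tent d y = 0.
Proof.
move=> d0 dy; apply/eqP; rewrite eq_le tent_ge0 andbT ge_max lexx /=.
by rewrite subr_le0 ler_pdivlMr ?mulr_gt0 // mul1r.
Qed.

Lemma continuous_edge_bump d : continuous (edge_bump d).
Proof.
move=> x; apply: cvgD; first exact: continuous_tent.
apply: (continuous_comp (f := fun x => 1 - x)) (continuous_tent _ _).
by apply: cvgB; [exact: cvg_cst | exact: cvg_id].
Qed.

Lemma edge_bump_ge0 d x : 0 <= edge_bump d x.
Proof. by rewrite addr_ge0 ?tent_ge0. Qed.

Lemma edge_bump_le2 d x : 0 < d -> 0 <= x <= 1 -> edge_bump d x <= 2.
Proof.
move=> d0 /andP[x0 x1]; rewrite -[2]/(1 + 1 : R).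
by rewrite lerD // tent_le1 // subr_ge0.
Qed.

Lemma edge_bump_ge_half d x : 0 < d -> x < d \/ 1 - x < d ->
  2^-1 <= edge_bump d x.
Proof.
move=> d0 [xd|xd].
- by rewrite ler_wpDr ?tent_ge0 ?tent_ge_half.
- by rewrite ler_wpDl ?tent_ge0 ?tent_ge_half.
Qed.

Lemma edge_bump_eq0 d x : 0 < d -> 2 * d <= x -> 2 * d <= 1 - x ->
  edge_bump d x = 0.
Proof. by move=> d0 dx dx'; rewrite /edge_bump !tent_eq0 ?addr0. Qed.

Lemma edge_bump_near0 [x : R] : 0 < x < 1 ->
  \forall m \near \oo, edge_bump m.+1%:R^-1 x = 0.
Proof.
case/andP=> x0 x1; have m0 : 0 < Num.min x (1 - x) / 2.
  by rewrite divr_gt0 // lt_min x0 subr_gt0.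
have minx : Num.min x (1 - x) <= x by rewrite ge_min lexx.
have min1x : Num.min x (1 - x) <= 1 - x by rewrite ge_min lexx orbT.
have [N _ HN] := near_infty_natSinv_lt (PosNum m0).
exists N => // m /= /HN /= /ltW hm; rewrite edge_bump_eq0 //.
- by apply: le_trans minx; rewrite mulrC -ler_pdivlMr.
- by apply: le_trans min1x; rewrite mulrC -ler_pdivlMr.
Qed.

End edge_bump.

Lemma edge_bump_integral_small {R : realType} [phi : R -> R] [e : R] :
  (@lebesgue_measure R).-integrable `[0, 1] (EFin \o phi) ->
  0 < e -> exists2 d : R, 0 < d &
    \int[@lebesgue_measure R]_(x in `[0, 1]) (edge_bump d x * phi x) <= e.
Proof.
move=> iphi e0.
set D := `[0, 1]%classic : set R.
have mD : measurable D by exact: measurable_itv.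
have mphi : measurable_fun D phi.
  by apply/measurable_EFinP; exact: measurable_int iphi.
pose fn m x := (edge_bump m.+1%:R^-1 x * phi x)%:E.
pose G x := (2%:E * `|(phi x)%:E|)%E.
have mfn m : measurable_fun D (fn m).
  apply/measurable_EFinP; apply: measurable_funM => //.
  exact: measurable_funS (continuous_measurable_fun (continuous_edge_bump _)).
have iG : (@lebesgue_measure R).-integrable D G.
  by apply: integrableZl => //; exact: integrable_abse.
have fnG : {ae @lebesgue_measure R, forall x n, D x -> (`|fn n x| <= G x)%E}.
  apply: aeW => x n Dx; rewrite /fn /G -EFinM lee_fin normrM ler_wpM2r //.
  by rewrite ger0_norm ?edge_bump_ge0 // edge_bump_le2 //;
    move: Dx; rewrite /D /= in_itv.
have fn0 : {ae @lebesgue_measure R,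
    forall x, D x -> fn ^~ x @ \oo --> (cst 0 x : \bar R)}.
  have [A [mA A0 sA]] : (@lebesgue_measure R).-negligible ([set 0] `|` [set 1]).
    by apply: negligibleU; apply/negligibleP => //; exact: lebesgue_measure_set1.
  exists A; split => //; apply: subset_trans sA => x /=.
  apply: contra_notP => /not_orP [/eqP x0 /eqP x1].
  rewrite /D /= in_itv /= => /andP [x0' x1'].
  have x01 : 0 < x < 1 by rewrite !lt_neqAle eq_sym x0 x0' x1 x1'.
  apply: cvg_near_cst; move: (edge_bump_near0 x01); apply: filterS => m bump0.
  by rewrite /fn bump0 mul0r.
have [_ _] := @dominated_convergence _ _ _ (@lebesgue_measure R) D mD fn (cst 0) G mfn
  (measurable_cst _) fn0 iG fnG.
rewrite integral0 => /fine_cvg /cvgrPdist_le /(_ e e0) [N _ HN].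
exists N.+1%:R^-1; first by rewrite invr_gt0.
by have := HN N (leqnn N); rewrite /= sub0r normrN; apply: le_trans (ler_norm _).
Qed.

Lemma Rintegral_near_cst {d} {T : measurableType d} {R : realType}
    (mu : {measure set T -> \bar R}) [D : set T] [f : T -> R] [a eps : R] :
  measurable D -> (mu D < +oo)%E -> mu.-integrable D (EFin \o f) ->
  (forall x, D x -> `|f x - a| <= eps) ->
  `|\int[mu]_(x in D) f x - a * fine (mu D)| <= eps * fine (mu D).
Proof.
move=> mD muD if_ fa.
have icst r : mu.-integrable D (EFin \o cst r).
  exact: measurable_bounded_integrable mD muD (measurable_cst _) (bounded_cst _ _).
have ifa : mu.-integrable D (EFin \o (fun x => f x - a))
  := integrableB mD if_ (icst a).
rewrite -!Rintegral_cst // -RintegralB //; last exact: icst.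
apply: le_trans (le_normr_Rintegral mD ifa) _.
by apply: le_Rintegral => //; [exact: integrable_norm | exact: icst].
Qed.

Section window_average.
Context {R : realType}.
Notation mu := (@lebesgue_measure R).
Implicit Types c l d : R.

Definition window c l : set R := `](c - l / 2), (c + l / 2)[.

Lemma measurable_window c l : measurable (window c l).
Proof. exact: measurable_itv. Qed.

Lemma lebesgue_measure_window c l : 0 < l -> mu (window c l) = l%:E.
Proof.
move=> l0; rewrite lebesgue_measure_itv /= lte_fin ifT; last by lra.
by rewrite -EFinD; congr (_%:E); lra.
Qed.

Lemma lebesgue_measure_window01_le c l : 0 < l ->
  (mu (window c l `&` `[0%R, 1%R]) <= l%:E)%E.
Proof.
move=> l0; rewrite -(lebesgue_measure_window c l l0).
have mW := measurable_window c l.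
by apply: le_measure; rewrite ?inE //; exact: measurableI mW (measurable_itv _).
Qed.

Lemma window01_mass_defect c l d : 0 < c < 1 -> 0 < l -> l / 2 < d ->
  1 - fine (mu (window c l `&` `[0, 1])) / l <= 2 * edge_bump d c.
Proof.
move=> /andP[c0 c1] l0 ld; have d0 : 0 < d by apply: lt_trans ld; rewrite divr_gt0.
have [/andP[Wl Wr]|Wout] := boolP ((0 <= c - l / 2) && (c + l / 2 <= 1)).
  rewrite setIidl ?lebesgue_measure_window //= ?divff ?gt_eqF // ?subrr.
    by rewrite mulr_ge0 ?edge_bump_ge0.
  by move=> x; rewrite /window /= !in_itv /= => /andP[x1 x2]; apply/andP; split; lra.
have half : 2^-1 <= edge_bump d c.
  apply: edge_bump_ge_half => //.
  by move: Wout; rewrite negb_and -!ltNge => /orP[?|?]; [left|right]; lra.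
have : 0 <= fine (mu (window c l `&` `[0, 1])) / l.
  by rewrite divr_ge0 ?fine_ge0 ?measure_ge0 ?ltW.
lra.
Qed.

Lemma window_average_dist_le (f : R -> R) c l M eps d :
  0 < c < 1 -> 0 < l -> l / 2 < d -> {within `[0, 1], continuous f} ->
  (forall x, `[0, 1]%classic x -> `|f x| <= M) ->
  (forall x, `[0, 1]%classic x -> `|x - c| < l / 2 -> `|f x - f c| <= eps) ->
  `|l^-1 * \int[mu]_(x in window c l `&` `[0, 1]) f x - f c|
    <= eps + 2 * M * edge_bump d c.
Proof.
move=> c01 l0 ld cf fM fc; set J := window c l `&` `[0, 1]%classic.
have K01 : `[0, 1]%classic c by case/andP: c01 => c0 c1; rewrite /= in_itv /= !ltW.
have M0 : 0 <= M by apply: le_trans (fM c K01).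
have mJ : measurable J.
  by apply: measurableI; [exact: measurable_window | exact: measurable_itv].
have muJl := lebesgue_measure_window01_le c l l0.
have muJ : (mu J < +oo)%E by apply: le_lt_trans muJl _; rewrite ltry.
set m := fine (mu J); set r := m / l.
have r0 : 0 <= r by rewrite divr_ge0 ?fine_ge0 ?measure_ge0 ?ltW.
have r1 : r <= 1.
  by rewrite ler_pdivrMr ?mul1r // -lee_fin fineK // ge0_fin_numE ?measure_ge0.
have iJ : mu.-integrable J (EFin \o f).
  apply: integrableS (continuous_compact_integrable (@segment_compact R 0 1) cf) => //.
  by move=> x [].
have near_c x : J x -> `|f x - f c| <= eps.
  move=> [Wx Kx]; apply: fc Kx _.
  move: Wx; rewrite /window /= in_itv /= => /andP[x1 x2].
  by rewrite ltr_norml; apply/andP; split; lra.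
have eps0 : 0 <= eps by apply: le_trans (fc c K01 _); rewrite ?subrr ?normr0 ?divr_gt0.
have dev : `|l^-1 * \int[mu]_(x in J) f x - f c * r| <= eps.
  have -> : l^-1 * \int[mu]_(x in J) f x - f c * r
      = l^-1 * (\int[mu]_(x in J) f x - f c * m) by rewrite /r; ring.
  rewrite normrM ger0_norm; last by rewrite invr_ge0 ltW.
  apply: le_trans (ler_wpM2l _ (Rintegral_near_cst mu mJ muJ iJ near_c)) _.
    by rewrite invr_ge0 ltW.
  by rewrite mulrCA [l^-1 * m]mulrC -/r ler_piMr.
have defect : `|f c| * (1 - r) <= 2 * M * edge_bump d c.
  rewrite -mulrA mulrCA; apply: ler_pM; rewrite ?normr_ge0 ?subr_ge0 ?fM //.
  exact: window01_mass_defect.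
have -> : l^-1 * \int[mu]_(x in J) f x - f c
    = (l^-1 * \int[mu]_(x in J) f x - f c * r) - f c * (1 - r) by ring.
apply: le_trans (ler_normB _ _) _.
by rewrite normrM [`|1 - r|]ger0_norm ?subr_ge0 // lerD.
Qed.

End window_average.

Section block_average.
Context {R : numFieldType}.

Definition block_avg (u : nat -> R) (n : nat) : R :=
  n%:R^-1 * \sum_(n <= k < n.*2) u k.

Lemma block_avg_dist_le (u v w : nat -> R) (eps a : R) (n : nat) : (0 < n)%N ->
  (forall k, (n <= k < n.*2)%N -> `|u k - v k| <= eps + a * w k) ->
  `|block_avg u n - block_avg v n| <= eps + a * block_avg w n.
Proof.
move=> n0 uv; rewrite /block_avg -mulrBr -sumrB normrM ger0_norm ?invr_ge0 //.
apply: le_trans (ler_wpM2l _ (le_trans (ler_norm_sum _ _ _) (ler_sum_nat uv))) _.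
  by rewrite invr_ge0.
rewrite big_split /= sumr_const_nat -mulr_sumr -addnn addnK mulrDr -[eps *+ n]mulr_natr.
by rewrite mulrCA mulVf ?mulr1 1?[X in _ + X]mulrCA // pnatr_eq0 -lt0n.
Qed.

End block_average.

Section local_averages.
Context {R : realType} {c l : nat -> R} {f : R -> R}.
Hypotheses (hc : forall k, 0 < c k < 1) (hl0 : forall k, 0 < l k)
  (hldec : forall i j, (i <= j)%N -> l j <= l i) (hf : {within `[0, 1], continuous f}).

Lemma mu_k_Vn (n k : nat) : (n <= k < n.*2)%N -> mu_k c l f k (Vn c l n) =
  (l k)^-1 * \int[@lebesgue_measure R]_(x in window (c k) (l k) `&` `[0, 1]) f x.
Proof. by move=> kn; rewrite /mu_k [Vn c l n `&` _]setIidr // => x Ix; exists k. Qed.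

Lemma mu_A_Vn_dist_le [M eps eta d : R] [n : nat] : (0 < n)%N ->
  (forall x, `[0, 1]%classic x -> `|f x| <= M) ->
  (forall x y, `[0, 1]%classic x -> `[0, 1]%classic y ->
     `|x - y| < eta -> `|f x - f y| < eps) ->
  l n < eta -> l n < d ->
  `|mu_A c l f n (Vn c l n) - block_avg (f \o c) n|
    <= eps + 2 * M * block_avg (edge_bump d \o c) n.
Proof.
move=> n0 fM unif_f ln_eta ln_d; apply: block_avg_dist_le => // k /andP[nk kn].
rewrite mu_k_Vn ?nk //=; have lkn := hldec n k nk; have lk0 := hl0 k.
have Kc : `[0, 1]%classic (c k) by have /andP[? ?] := hc k; rewrite /= in_itv /= !ltW.
apply: window_average_dist_le => //; first lra.
by move=> x Kx xc; apply/ltW/unif_f => //; lra.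
Qed.

End local_averages.

Theorem lemma4p5 (R : realType) (c l : nat -> R) (phi f : R -> R)
  (hc : forall k, 0 < c k < 1)
  (hl0 : forall k, 0 < l k)
  (hldec : forall i j, (i <= j)%N -> l j <= l i)
  (hlcvg : l @ \oo --> 0)
  (* (A1) *)
  (hphi_int : (@lebesgue_measure R).-integrable `[0, 1] (EFin \o phi))
  (hphi_pos : {ae @lebesgue_measure R, forall x, `[0, 1]%classic x -> 0 < phi x})
  (hA1 : forall g : R -> R, {within `[0, 1], continuous g} ->
     (fun n : nat => (n%:R)^-1 * \sum_(n <= k < n.*2) g (c k)) @ \oo -->
       \int[@lebesgue_measure R]_(x in `[0, 1]) (g x * phi x))
  (* (A3) *)
  (hA3 : exists q : nat -> nat, (q @ \oo --> \oo)%classic /\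
     forall eps : R, 0 < eps -> \forall n \near \oo,
       forall i j, Ablocks n (q n) i -> Ablocks n (q n) j -> i <> j ->
         l i + l j < eps * (2 * `|c i - c j|))
  (hf : {within `[0, 1], continuous f}) :
  (fun n : nat => mu_A c l f n (Vn c l n)
      - \int[@lebesgue_measure R]_(x in `[0, 1]) (f x * phi x)) @ \oo --> 0.
Proof.
suff dev : (fun n => mu_A c l f n (Vn c l n) - block_avg (f \o c) n) @ \oo --> 0.
  by apply/subr_cvg0; exact: cvg_sub0 dev (hA1 f hf).
have [M fM] := within_continuous_compact_bounded (@segment_compact R 0 1) hf.
have M0 : 0 <= M.
  by apply: le_trans (normr_ge0 (f 0)) (fM 0 _); rewrite /= in_itv /= lexx ler01.
apply/cvgrPdist_le => e e0; set eps := e / (1 + 4 * M).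
have eps0 : 0 < eps by rewrite divr_gt0 // ltr_pwDl // mulr_ge0.
have [eta eta0 unif_f] :=
  within_continuous_compact_unif (@segment_compact R 0 1) hf eps0.
have [d d0 small_bump] := edge_bump_integral_small hphi_int eps0.
have /cvgrPdist_le/(_ eps eps0) avg_bump :=
  hA1 _ (continuous_subspaceT (continuous_edge_bump d)).
have min0 : 0 < Num.min eta d by rewrite lt_min eta0 d0.
have /cvgrPdist_lt/(_ _ min0) l_small := hlcvg.
near=> n.
have n0 : (0 < n)%N by near: n; exists 1%N.
have /andP[ln_eta ln_d] : (l n < eta) && (l n < d).
  by rewrite -lt_min -[l n](ger0_norm (ltW (hl0 n))) -normrN -sub0r; near: n.
have bump_n : block_avg (edge_bump d \o c) n <= 2 * eps.
  have : `|\int[@lebesgue_measure R]_(x in `[0, 1]) (edge_bump d x * phi x)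
           - block_avg (edge_bump d \o c) n| <= eps by near: n.
  by rewrite distrC ler_distl => /andP[_]; lra.
rewrite sub0r normrN.
apply: le_trans (mu_A_Vn_dist_le hc hl0 hldec hf n0 fM unif_f ln_eta ln_d) _.
have e_eps : eps * (1 + 4 * M) = e by rewrite mulfVK // gt_eqF // ltr_pwDl // mulr_ge0.
have := ler_wpM2l (mulr_ge0 (ler0n _ 2) M0) bump_n; lra.
Unshelve. all: end_near.
Qed.
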